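(* Let $p\in\mathbb N$. (i) If $\mathbf K$ is a finite field, the group $\mathrm{GL}_{p-rec}(\mathbf K)$ is residually finite. (ii) If $\mathbf K$ is an arbitrary (commutative) field, every finitely generated subgroup $\Gamma\subset\mathrm{GL}_{p-rec}(\mathbf K)$ is residually finite.
   Context: $\mathcal M_{p\times p}$ is the monoid of pairs $(U,W)$ of words of common length over $\{0,\dots,p-1\}$. For $A:\mathcal M_{p\times p}\to\mathbf K$ (values $A[U,W]$), shift maps act by $(\rho(S,T)A)[U,W]=A[US,WT]$; $\mathrm{Rec}_{p\times p}(\mathbf K)$ is the set of $A$ for which the span of $\{\rho(S,T)A\}$ is finite-dimensional. It is an algebra for $(AB)[U,W]=\sum_{V\in\{0,\dots,p-1\}^l}A[U,V]B[V,W]$ ($(U,W)$ of length $l$) with identity $\mathrm{Id}[U,W]=\delta_{U,W}$. $\mathrm{GL}_{p-rec}(\mathbf K)$ is the group of units of $\mathrm{Rec}_{p\times p}(\mathbf K)$. A group $\Gamma$ is residually finite if for every $\gamma\ne1$ there is a homomorphism $\pi$ to a finite group with $\pi(\gamma)\ne1$. *)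

From mathcomp Require Import all_boot all_algebra all_fingroup.
From Stdlib Require List.
Set Implicit Arguments. Unset Strict Implicit. Unset Printing Implicit Defensive.
Import GRing.Theory.
Local Open Scope ring_scope.

(* A function on the monoid M_{p x p}: for each common length n, a value
   A[U,W] for every pair of words U, W of length n over {0,...,p-1}. *)
Definition Mfun (K : Type) (p : nat) :=
  forall n : nat, n.-tuple 'I_p -> n.-tuple 'I_p -> K.

Definition shift (K : Type) (p m : nat) (S T : m.-tuple 'I_p) (A : Mfun K p)
  : Mfun K p :=
  fun n U W => A (n + m)%N (cat_tuple U S) (cat_tuple W T).

(* A is recognizable: the span of all shifts rho(S,T)A lies in the span of
   finitely many functions B_0..B_{d-1}, i.e. is finite-dimensional. *)
Definition recognizable (K : fieldType) (p : nat) (A : Mfun K p) : Prop :=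
  exists (d : nat) (B : 'I_d -> Mfun K p),
    forall (m : nat) (S T : m.-tuple 'I_p),
      exists c : 'I_d -> K,
        shift S T A = (fun n U W => \sum_(i < d) c i * B i n U W).

Definition mulM (K : fieldType) (p : nat) (A B : Mfun K p) : Mfun K p :=
  fun n U W => \sum_(V : n.-tuple 'I_p) A n U V * B n V W.

Definition idM (K : fieldType) (p : nat) : Mfun K p :=
  fun n U W => (U == W)%:R.

Definition GLrec (K : fieldType) (p : nat) (A : Mfun K p) : Prop :=
  recognizable A /\
  exists B, recognizable B /\ mulM A B = @idM K p /\ mulM B A = @idM K p.

Inductive gen_subgroup (K : fieldType) (p : nat) (gens : seq (Mfun K p))
  : Mfun K p -> Prop :=
| gen_one : gen_subgroup gens (@idM K p)
| gen_gen : forall A, List.In A gens -> gen_subgroup gens A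
| gen_mul : forall A B, gen_subgroup gens A -> gen_subgroup gens B ->
            gen_subgroup gens (mulM A B)
| gen_inv : forall A B, gen_subgroup gens A ->
            mulM A B = @idM K p -> mulM B A = @idM K p -> gen_subgroup gens B.

Definition residually_finite (X : Type) (mul : X -> X -> X) (one : X)
  (G : X -> Prop) : Prop :=
  forall g, G g -> g <> one ->
    exists (gT : finGroupType) (pi : X -> gT),
      (forall a b, G a -> G b -> pi (mul a b) = (pi a * pi b)%g) /\
      pi g != 1%g.

(* Restricting to pairs of words of a fixed length n is multiplicative, so it
   maps GL_{p-rec}(K) homomorphically into GL_N(K), N = p^n, and every g <> 1
   already differs from the identity at some length n.  For finite K the target
   is finite.  For a finitely generated subgroup, all level-n matrices have
   entries in the subring R of K generated by the level-n entries of the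
   generators and of their inverses, and some morphism from R to a finite field
   does not kill the nonzero entry of g - 1 (Malcev); composing with it gives
   the finite quotient.
   The Malcev step adjoins one generator b at a time: for 0 <> x in R[b] there
   is 0 <> y in R such that every morphism psi : R -> F (F finite) with
   psi y <> 0 extends to R[b] -> F' (F' a finite extension of F) without
   killing x, by sending b to a root of psi(f), f a minimal polynomial of b over
   R, or, if b is transcendental over R, to a root of X psi(g) - 1 where
   x = g(b). *)

From mathcomp Require Import all_boot all_algebra all_fingroup all_field zify.
From Stdlib Require Import ClassicalEpsilon Classical FunctionalExtensionality.
From Stdlib Require List.
Set Implicit Arguments. Unset Strict Implicit. Unset Printing Implicit Defensive.
Import GRing.Theory.
Local Open Scope ring_scope.

(** * Subrings and morphisms defined on them *)

Section Subring.
Variable K : nzRingType.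

Record subring (S : K -> Prop) : Prop := Subring {
  subring0 : S 0;
  subring1 : S 1;
  subringD : forall a b, S a -> S b -> S (a + b);
  subringN : forall a, S a -> S (- a);
  subringM : forall a b, S a -> S b -> S (a * b) }.

Record subring_morph (S : K -> Prop) (F : nzRingType) (phi : K -> F) : Prop :=
  SubringMorph {
  morph1 : phi 1 = 1;
  morphD : forall a b, S a -> S b -> phi (a + b) = phi a + phi b;
  morphM : forall a b, S a -> S b -> phi (a * b) = phi a * phi b }.

Variable S : K -> Prop.
Hypothesis HS : subring S.

Lemma subringB a b : S a -> S b -> S (a - b).
Proof. by move=> Sa Sb; apply: subringD (subringN HS Sb). Qed.

Lemma subringX a k : S a -> S (a ^+ k).
Proof.
move=> Sa; elim: k => [|k IHk]; first by rewrite expr0; apply: subring1.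
by rewrite exprS; apply: subringM.
Qed.

Lemma subring_nat k : S k%:R.
Proof.
elim: k => [|k IHk]; first exact: subring0.
by rewrite -addn1 natrD; apply: subringD => //; apply: subring1.
Qed.

Lemma subring_sum (I : Type) (r : seq I) (f : I -> K) :
  (forall i, S (f i)) -> S (\sum_(i <- r) f i).
Proof.
move=> Sf; elim: r => [|i r IHr]; first by rewrite big_nil; apply: subring0.
by rewrite big_cons; apply: subringD.
Qed.

Variables (F : nzRingType) (phi : K -> F).
Hypothesis Hphi : subring_morph S phi.

Lemma morph0 : phi 0 = 0.
Proof.
apply: (addrI (phi 0)); rewrite addr0 -(morphD Hphi) ?addr0 //; exact: subring0.
Qed.

Lemma morphN a : S a -> phi (- a) = - phi a.
Proof.
move=> Sa; apply: (addrI (phi a)); rewrite subrr -(morphD Hphi) ?subrr ?morph0 //.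
exact: subringN.
Qed.

Lemma morphB a b : S a -> S b -> phi (a - b) = phi a - phi b.
Proof. by move=> Sa Sb; rewrite (morphD Hphi) ?morphN //; apply: subringN. Qed.

Lemma morphX a k : S a -> phi (a ^+ k) = phi a ^+ k.
Proof.
move=> Sa; elim: k => [|k IHk]; first by rewrite !expr0 (morph1 Hphi).
by rewrite !exprS (morphM Hphi) ?IHk //; apply: subringX.
Qed.

Lemma morph_nat k : phi k%:R = k%:R.
Proof.
elim: k => [|k IHk]; first exact: morph0.
by rewrite -addn1 !natrD (morphD Hphi) ?IHk ?(morph1 Hphi) //;
  [apply: subring_nat | apply: subring1].
Qed.

Lemma morph_sum (I : Type) (r : seq I) (f : I -> K) :
  (forall i, S (f i)) -> phi (\sum_(i <- r) f i) = \sum_(i <- r) phi (f i).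
Proof.
move=> Sf; elim: r => [|i r IHr]; first by rewrite !big_nil morph0.
by rewrite !big_cons (morphD Hphi) ?IHr //; apply: subring_sum.
Qed.

Lemma subring_morph_comp (F' : nzRingType) (iota : {rmorphism F -> F'}) :
  subring_morph S (iota \o phi).
Proof.
split=> [|a b Sa Sb|a b Sa Sb] /=; first by rewrite (morph1 Hphi) rmorph1.
  by rewrite (morphD Hphi) ?rmorphD.
by rewrite (morphM Hphi) ?rmorphM.
Qed.

End Subring.

(** * Polynomials over a subring and simple extensions *)

Lemma size_sub_lead (R : nzRingType) (p q : {poly R}) :
  p != 0 -> size p = size q -> lead_coef p = lead_coef q -> (size (p - q)%R < size p)%N.
Proof.
move=> nz_p eq_size eq_lead; have sp_gt0 : (0 < size p)%N by rewrite size_poly_gt0.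
rewrite -(prednK sp_gt0) ltnS; apply/leq_sizeP => j; rewrite leq_eqVlt coefB.
case/orP=> [/eqP <- | lt_pj]; rewrite ?[in q`_ _]eq_size.
  by rewrite -!lead_coefE eq_lead subrr.
by rewrite !nth_default ?subrr // -?eq_size -(prednK sp_gt0).
Qed.

Section PolyOver.
Variable K : idomainType.
Variable S : K -> Prop.
Hypothesis HS : subring S.

Definition poly_over (h : {poly K}) := forall i, S h`_i.

Lemma poly_over0 : poly_over 0.
Proof. by move=> i; rewrite coef0; apply: subring0. Qed.

Lemma poly_overC c : S c -> poly_over c%:P.
Proof. by move=> Sc i; rewrite coefC; case: eqP => _ //; apply: subring0. Qed.

Lemma poly_overXn k : poly_over 'X^k.
Proof. by move=> i; rewrite coefXn; apply: subring_nat. Qed.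

Lemma poly_overD h1 h2 : poly_over h1 -> poly_over h2 -> poly_over (h1 + h2).
Proof. by move=> S1 S2 i; rewrite coefD; apply: subringD. Qed.

Lemma poly_overN h : poly_over h -> poly_over (- h).
Proof. by move=> Sh i; rewrite coefN; apply: subringN. Qed.

Lemma poly_overB h1 h2 : poly_over h1 -> poly_over h2 -> poly_over (h1 - h2).
Proof. by move=> S1 S2; apply: poly_overD (poly_overN S2). Qed.

Lemma poly_overM h1 h2 : poly_over h1 -> poly_over h2 -> poly_over (h1 * h2).
Proof. by move=> S1 S2 i; rewrite coefM; apply: subring_sum => // j; apply: subringM. Qed.

Lemma poly_overZ c h : S c -> poly_over h -> poly_over (c *: h).
Proof. by move=> Sc Sh i; rewrite coefZ; apply: subringM. Qed.

Lemma pseudo_divp_over f h : poly_over f -> poly_over h -> f != 0 ->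
  exists k q r, [/\ poly_over q, poly_over r, (size r < size f)%N
                  & lead_coef f ^+ k *: h = q * f + r].
Proof.
move=> Sf Sh nz_f; have [n] := ubnP (size h); elim: n h Sh => // n IHn h Sh.
rewrite ltnS => le_hn; case: (ltnP (size h) (size f)) => [lt_hf | le_fh].
  exists 0%N, 0, h; split=> //; last by rewrite expr0 scale1r mul0r add0r.
  exact: poly_over0.
set c := lead_coef f; set m := (size h - size f)%N.
have nz_c : c != 0 by rewrite lead_coef_eq0.
have nz_h : h != 0 by rewrite -size_poly_gt0 (leq_trans _ le_fh) ?size_poly_gt0.
have nz_lh : lead_coef h != 0 by rewrite lead_coef_eq0.
have Sc : S c := Sf _.
have Slh : S (lead_coef h) := Sh _.
set h' := c *: h - lead_coef h *: (f * 'X^m).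
have Sh' : poly_over h'.
  by apply: poly_overB; apply: poly_overZ => //; apply: poly_overM => //; apply: poly_overXn.
have lt_h' : (size h' < size h)%N.
  rewrite -[in X in (_ < X)%N](size_scale h nz_c) size_sub_lead //.
  - by rewrite scale_poly_eq0 negb_or nz_c.
  - by rewrite !size_scale ?size_mulXn ?subnK.
  - by rewrite !lead_coefZ lead_coefM lead_coefXn mulr1 mulrC.
have [k [q [r [Sq Sr lt_rf Eh']]]] := IHn h' Sh' (leq_trans lt_h' le_hn).
exists k.+1, (q + (c ^+ k * lead_coef h) *: 'X^m), r; split=> //.
  apply: poly_overD Sq (poly_overZ _ (poly_overXn _)).
  exact: subringM (subringX HS _ Sc) Slh.
have -> : lead_coef f ^+ k.+1 *: h = c ^+ k *: h' + (c ^+ k * lead_coef h) *: (f * 'X^m).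
  by rewrite /h' scalerBr scalerA -exprSr -scalerA subrK.
by rewrite Eh' mulrDl -scalerAl (mulrC 'X^m) addrAC.
Qed.

Definition adjoin (b z : K) := exists2 h, poly_over h & h.[b] = z.

Lemma adjoin_subring b : subring (adjoin b).
Proof.
split.
- by exists 0; [apply: poly_over0 | rewrite horner0].
- by exists 1; [apply: poly_overC; apply: subring1 | rewrite hornerC].
- move=> _ _ [h1 S1 <-] [h2 S2 <-]; exists (h1 + h2); last by rewrite hornerD.
  exact: poly_overD.
- by move=> _ [h Sh <-]; exists (- h); [apply: poly_overN | rewrite hornerN].
- move=> _ _ [h1 S1 <-] [h2 S2 <-]; exists (h1 * h2); last by rewrite hornerM.
  exact: poly_overM.
Qed.

Lemma adjoin_base b a : S a -> adjoin b a.
Proof. by move=> Sa; exists a%:P; [apply: poly_overC | rewrite hornerC]. Qed.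

Lemma adjoin_elem b : adjoin b b.
Proof. by exists 'X; [move=> i; rewrite coefX; apply: subring_nat | rewrite hornerX]. Qed.

Section MapPoly.
Variables (F : comNzRingType) (phi : K -> F).
Hypothesis Hphi : subring_morph S phi.

Lemma coef_map_over h i : (map_poly phi h)`_i = phi h`_i.
Proof. exact/coef_map_id0/(morph0 HS Hphi). Qed.

Lemma map_polyC_over c : map_poly phi c%:P = (phi c)%:P.
Proof.
apply/polyP => i; rewrite coef_map_over !coefC; case: eqP => // _.
exact: (morph0 HS Hphi).
Qed.

Lemma map_polyB_over h1 h2 : poly_over h1 -> poly_over h2 ->
  map_poly phi (h1 - h2) = map_poly phi h1 - map_poly phi h2.
Proof.
by move=> S1 S2; apply/polyP => i; rewrite coefB !coef_map_over coefB (morphB HS Hphi).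
Qed.

Lemma map_polyD_over h1 h2 : poly_over h1 -> poly_over h2 ->
  map_poly phi (h1 + h2) = map_poly phi h1 + map_poly phi h2.
Proof.
by move=> S1 S2; apply/polyP => i; rewrite coefD !coef_map_over coefD (morphD Hphi).
Qed.

Lemma map_polyM_over h1 h2 : poly_over h1 -> poly_over h2 ->
  map_poly phi (h1 * h2) = map_poly phi h1 * map_poly phi h2.
Proof.
move=> S1 S2; apply/polyP => i; rewrite coef_map_over !coefM (morph_sum HS Hphi).
  by apply: eq_bigr => j _; rewrite (morphM Hphi) // !coef_map_over.
by move=> j; apply: subringM.
Qed.

Lemma map_polyZ_over c h : S c -> poly_over h ->
  map_poly phi (c *: h) = phi c *: map_poly phi h.
Proof.
by move=> Sc Sh; apply/polyP => i; rewrite coefZ !coef_map_over coefZ (morphM Hphi).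
Qed.

End MapPoly.

Section AdjoinEval.
Variables (b : K) (F : comNzRingType) (phi : K -> F) (t : F).
Hypothesis Hphi : subring_morph S phi.
Hypothesis ker_phi : forall h, poly_over h -> h.[b] = 0 -> (map_poly phi h).[t] = 0.

(* [z] is sent to [h(t)] for a chosen representation [z = h(b)]; [ker_phi]
   makes the value independent of the choice. *)
Definition adjoin_eval (z : K) : F :=
  (map_poly phi (epsilon (inhabits 0) (fun h => poly_over h /\ h.[b] = z))).[t].

Lemma adjoin_evalE h : poly_over h -> adjoin_eval h.[b] = (map_poly phi h).[t].
Proof.
move=> Sh; rewrite /adjoin_eval; set g := epsilon _ _.
have [Sg Eg] : poly_over g /\ g.[b] = h.[b].
  by apply: (epsilon_spec (inhabits 0) (fun g => poly_over g /\ g.[b] = h.[b])); exists h.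
have := ker_phi (poly_overB Sg Sh); rewrite hornerD hornerN Eg subrr => /(_ erefl).
by rewrite (map_polyB_over Hphi) // hornerD hornerN => /eqP; rewrite subr_eq0 => /eqP.
Qed.

Lemma adjoin_eval_morph : subring_morph (adjoin b) adjoin_eval.
Proof.
split.
- rewrite -{1}(hornerC 1 b) adjoin_evalE ?(map_polyC_over Hphi 1) ?hornerC ?(morph1 Hphi) //.
  by apply: poly_overC; apply: subring1.
- move=> _ _ [h1 S1 <-] [h2 S2 <-].
  by rewrite -hornerD !adjoin_evalE ?(map_polyD_over Hphi) ?hornerD //; apply: poly_overD.
- move=> _ _ [h1 S1 <-] [h2 S2 <-].
  by rewrite -hornerM !adjoin_evalE ?(map_polyM_over Hphi) ?hornerM //; apply: poly_overM.
Qed.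

End AdjoinEval.
End PolyOver.

(** * Extending morphisms to finite fields along simple extensions *)

Lemma ex_minimal_size (R : nzRingType) (P : {poly R} -> Prop) :
  (exists p, P p) -> exists p, P p /\ forall q, P q -> (size p <= size q)%N.
Proof.
case=> p Pp; have [n] := ubnP (size p); elim: n p Pp => // n IHn p Pp.
rewrite ltnS => le_pn.
case: (classic (exists q, P q /\ (size q < size p)%N)) => [[q [Pq lt_qp]] | no_q].
  exact: IHn q Pq (leq_trans lt_qp le_pn).
exists p; split=> // q Pq; rewrite leqNgt; apply/negP => lt_qp.
by apply: no_q; exists q.
Qed.

Lemma finField_ext_root (F : finFieldType) (P : {poly F}) : (1 < size P)%N ->
  exists (F' : finFieldType) (iota : {rmorphism F -> F'}) (t : F'),
    root (map_poly iota P) t.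
Proof.
move=> sP; have nz_P : P != 0 by rewrite -size_poly_gt0 ltnW.
have [L [rs DP _]] := FinSplittingFieldFor nz_P.
exists (FinFieldExtType L), (in_alg L : {rmorphism F -> FinFieldExtType L}).
case: rs DP => [|r rs] DP.
  by move/eqp_size: DP; rewrite big_nil size_poly1 size_map_poly => E; rewrite E in sP.
by exists r; rewrite (eqp_root DP) big_cons rootM root_XsubC eqxx.
Qed.

Definition finite_quotient_nonzero (K : nzRingType) (S : K -> Prop) (y : K) :=
  exists (F : finFieldType) (phi : K -> F), subring_morph S phi /\ phi y != 0.

Section Lift.
Variables (K : idomainType) (S : K -> Prop) (b : K).
Hypothesis HS : subring S.

Lemma adjoin_morph_root (F : finFieldType) (psi : K -> F) (P : {poly F}) :
  subring_morph S psi -> (1 < size P)%N ->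
  (forall h, poly_over S h -> h.[b] = 0 -> P %| map_poly psi h) ->
  exists (F' : finFieldType) (iota : {rmorphism F -> F'}) (phi : K -> F') (t : F'),
    [/\ subring_morph (adjoin S b) phi, root (map_poly iota P) t
      & forall h, poly_over S h -> phi h.[b] = (map_poly iota (map_poly psi h)).[t]].
Proof.
move=> Hpsi sP dvdP; have [F' [iota [t Pt]]] := finField_ext_root sP.
have Hpsi' := subring_morph_comp Hpsi iota.
have map_comp h : map_poly (iota \o psi) h = map_poly iota (map_poly psi h).
  by rewrite map_poly_comp_id0 ?rmorph0.
have ker h : poly_over S h -> h.[b] = 0 -> (map_poly (iota \o psi) h).[t] = 0.
  by move=> Sh hb; apply/eqP; rewrite map_comp; apply: root_dvdp Pt; rewrite dvdp_map dvdP.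
exists F', iota, (adjoin_eval S b (iota \o psi) t), t; split=> //.
  exact: adjoin_eval_morph.
by move=> h Sh; rewrite (adjoin_evalE HS Hpsi' ker) // map_comp.
Qed.

Lemma transcendental_lift g : poly_over S g ->
  (forall h, poly_over S h -> h.[b] = 0 -> h = 0) ->
  forall (F : finFieldType) (psi : K -> F), subring_morph S psi ->
    psi (lead_coef g) != 0 -> finite_quotient_nonzero (adjoin S b) g.[b].
Proof.
move=> Sg transc F psi Hpsi psi_lg.
(* a root [t] of [X psi(g) - 1] is a point where [psi(g)] does not vanish *)
set Q := map_poly psi g; set P := Q * 'X + (-1)%:P.
have nz_g : g != 0.
  by apply: contraNneq psi_lg => ->; rewrite lead_coef0 (morph0 HS Hpsi).
have sP : (1 < size P)%N.
  by rewrite size_MXaddC oppr_eq0 oner_eq0 andbF size_map_poly_id0 // ltnS size_poly_gt0.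
have dvdP h : poly_over S h -> h.[b] = 0 -> P %| map_poly psi h.
  by move=> Sh hb; rewrite (transc h Sh hb) map_poly0 dvdp0.
have [F' [iota [phi [t [Hphi Pt phiE]]]]] := adjoin_morph_root Hpsi sP dvdP.
exists F', phi; split=> //; rewrite phiE //.
apply: contraTneq Pt => Qt0; rewrite /root /P rmorphD rmorphM /= map_polyX map_polyC.
rewrite hornerD hornerMX hornerC /Q Qt0.
by rewrite mul0r add0r fmorph_eq0 oppr_eq0 oner_eq0.
Qed.

Section Algebraic.
Variable f : {poly K}.
Hypotheses (Sf : poly_over S f) (nz_f : f != 0) (fb : f.[b] = 0).
Hypothesis f_min : forall h, poly_over S h -> (size h < size f)%N -> h.[b] = 0 -> h = 0.

Lemma min_poly_dvd h : poly_over S h -> h.[b] = 0 ->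
  exists k q, poly_over S q /\ lead_coef f ^+ k *: h = q * f.
Proof.
move=> Sh hb; have [k [q [r [Sq Sr lt_rf Eh]]]] := pseudo_divp_over HS Sf Sh nz_f.
suff r0 : r = 0 by exists k, q; rewrite Eh r0 addr0.
apply: f_min => //; move/(congr1 (horner^~ b)): Eh.
by rewrite hornerZ hornerD hornerM hb fb !mulr0 add0r.
Qed.

Lemma min_poly_inv r : poly_over S r -> (size r < size f)%N -> r.[b] != 0 ->
  exists e w, [/\ S e, e != 0, adjoin S b w & r.[b] * w = e].
Proof.
have [n] := ubnP (size r); elim: n r => // n IHn r; rewrite ltnS => le_rn Sr lt_rf rb.
have nz_r : r != 0 by apply: contraNneq rb => ->; rewrite horner0.
case: (leqP (size r) 1) => [le_r1 | lt1r].
  have Er := size1_polyC le_r1.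
  exists r`_0, 1; split; first exact: Sr.
  - by move: rb; rewrite {1}Er hornerC.
  - by apply: (adjoin_base HS); apply: subring1.
  - by rewrite {1}Er hornerC mulr1.
(* From [lc(r)^k f = q r + r2] we get [r(b) q(b) = - r2(b)], so an inverse of
   [r2(b)] up to [S] yields one of [r(b)]. *)
have [k [q [r2 [Sq Sr2 lt_r2r Ef]]]] := pseudo_divp_over HS Sr Sf nz_r.
have Eb : q.[b] * r.[b] + r2.[b] = 0.
  by rewrite -hornerM -hornerD -Ef hornerZ fb mulr0.
have r2b : r2.[b] != 0.
  (* otherwise [r2 = 0], and [q] is a shorter nonzero [S]-polynomial vanishing at [b] *)
  apply/eqP => r2b; have r2_0 : r2 = 0 by apply: f_min; rewrite // (ltn_trans lt_r2r).
  rewrite r2_0 addr0 in Ef.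
  have qb : q.[b] = 0.
    by move: Eb; rewrite r2b addr0 => /eqP; rewrite mulf_eq0 (negbTE rb) orbF => /eqP.
  have nz_q : q != 0.
    apply: contraNneq nz_f => q0; move/eqP: Ef; rewrite q0 mul0r scale_poly_eq0.
    by rewrite expf_eq0 lead_coef_eq0 (negbTE nz_r) andbF.
  have lt_qf : (size q < size f)%N.
    have : size (lead_coef r ^+ k *: f) = size (q * r) by rewrite Ef.
    rewrite size_scale ?expf_neq0 ?lead_coef_eq0 // size_mul // => ->.
    by move: lt1r; lia.
  by move: nz_q; rewrite (f_min Sq lt_qf qb) eqxx.
have [e [w2 [Se nz_e Sw2 Ew2]]] :=
  IHn r2 (leq_trans lt_r2r le_rn) Sr2 (ltn_trans lt_r2r lt_rf) r2b.
have HSb := adjoin_subring HS b.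
exists e, (- q.[b] * w2); split=> //.
  by apply: (subringM HSb _ Sw2); apply: (subringN HSb); exists q.
have r2E : r2.[b] = - (q.[b] * r.[b]) by apply/eqP; rewrite -addr_eq0 addrC Eb.
by rewrite -Ew2 r2E mulrA mulrN (mulrC r.[b]).
Qed.

Lemma algebraic_lift g : poly_over S g -> g.[b] != 0 ->
  exists2 y, S y /\ y != 0 & forall (F : finFieldType) (psi : K -> F),
    subring_morph S psi -> psi y != 0 -> finite_quotient_nonzero (adjoin S b) g.[b].
Proof.
move=> Sg gb; set c := lead_coef f; have Sc : S c := Sf _.
have nz_c : c != 0 by rewrite lead_coef_eq0.
have [k [q [r [Sq Sr lt_rf Eg]]]] := pseudo_divp_over HS Sf Sg nz_f.
have rb : r.[b] = c ^+ k * g.[b].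
  by move/(congr1 (horner^~ b)): Eg; rewrite hornerZ hornerD hornerM fb mulr0 add0r.
have nz_rb : r.[b] != 0 by rewrite rb mulf_neq0 ?expf_neq0.
have [e [w [Se nz_e Sw Ew]]] := min_poly_inv Sr lt_rf nz_rb.
exists (c * e); first by split; [apply: subringM | rewrite mulf_neq0].
move=> F psi Hpsi; rewrite (morphM Hpsi) // mulf_eq0 negb_or => /andP [psi_c psi_e].
have sf : (1 < size f)%N.
  rewrite ltnNge; apply/negP => /size1_polyC Ef.
  by move: nz_f fb; rewrite Ef hornerC polyC_eq0 => /eqP nz_f0 /nz_f0.
have dvdP h : poly_over S h -> h.[b] = 0 -> map_poly psi f %| map_poly psi h.
  move=> Sh hb; have [k' [q' [Sq' Eh]]] := min_poly_dvd Sh hb.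
  rewrite -(dvdpZr _ _ (expf_neq0 k' psi_c)) -(morphX HS Hpsi) //.
  rewrite -(map_polyZ_over HS Hpsi) ?Eh ?(map_polyM_over HS Hpsi) ?dvdp_mull //.
  exact: subringX.
have sP : (1 < size (map_poly psi f))%N by rewrite size_map_poly_id0.
have [F' [iota [phi [t [Hphi _ phiE]]]]] := adjoin_morph_root Hpsi sP dvdP.
have phiS a : S a -> phi a = iota (psi a).
  move=> Sa; rewrite -(hornerC a b) phiE ?(map_polyC_over HS Hpsi a) ?map_polyC ?hornerC //.
  exact: poly_overC.
exists F', phi; split=> //.
have Scw : adjoin S b (c ^+ k * w).
  by apply: (subringM (adjoin_subring HS b)) Sw; apply: (adjoin_base HS); apply: subringX.
have : phi (g.[b] * (c ^+ k * w)) = iota (psi e) by rewrite mulrA (mulrC g.[b]) -rb Ew phiS.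
rewrite (morphM Hphi) //; last by exists g.
move=> E; apply/eqP => phig0; move/eqP: E; rewrite phig0 mul0r eq_sym fmorph_eq0.
by rewrite (negbTE psi_e).
Qed.

End Algebraic.

Lemma adjoin_morph_lift x : adjoin S b x -> x != 0 ->
  exists2 y, S y /\ y != 0 & forall (F : finFieldType) (psi : K -> F),
    subring_morph S psi -> psi y != 0 -> finite_quotient_nonzero (adjoin S b) x.
Proof.
move=> [g Sg <-] gb.
case: (classic (exists f, [/\ poly_over S f, f != 0 & f.[b] = 0])) => [alg | transc].
  have [f [[Sf nz_f fb] f_min]] := ex_minimal_size alg.
  apply: (algebraic_lift Sf nz_f fb) => // h Sh lt_hf hb.
  apply/eqP; apply: contraTT lt_hf => nz_h; rewrite -leqNgt; exact: f_min.
have nz_g : g != 0 by apply: contraNneq gb => ->; rewrite horner0.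
exists (lead_coef g); first by split; [exact: Sg | rewrite lead_coef_eq0].
apply: transcendental_lift => // h Sh hb.
by apply/eqP/negPn/negP => nz_h; apply: transc; exists h.
Qed.

End Lift.

(** * Finitely generated subrings *)

Definition prime_subring (K : nzRingType) (z : K) := exists m : int, z = m%:~R.

Lemma prime_subring_subring (K : nzRingType) : subring (@prime_subring K).
Proof.
split.
- by exists 0.
- by exists 1.
- by move=> _ _ [m ->] [m' ->]; exists (m + m'); rewrite intrD.
- by move=> _ [m ->]; exists (- m); rewrite intrN.
- by move=> _ _ [m ->] [m' ->]; exists (m * m'); rewrite intrM.
Qed.

Lemma absz_natr_eq0 (R : nzRingType) (z : int) : z%:~R = 0 :> R -> `|z|%:R = 0 :> R.
Proof. by case: z => n //=; rewrite NegzE intrN => /eqP; rewrite oppr_eq0 => /eqP. Qed.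

Lemma ex_prime_kernel (K : idomainType) (m : int) : m%:~R != 0 :> K ->
  exists2 q, prime q & (forall z : int, z%:~R = 0 :> K -> (q %| z)%Z) /\ ~~ (q %| m)%Z.
Proof.
move=> nz_m; case: (classic (exists q, q \in [pchar K])) => [[q Kq] | char0].
  exists q; first exact: pcharf_prime Kq.
  by split=> [z /eqP | ]; rewrite (dvdz_pcharf Kq).
have [q lt_mq pr_q] := prime_above `|m|.
exists q => //; split=> [z /absz_natr_eq0/eqP z0 | ].
  suff -> : z = 0 by rewrite dvdz0.
  apply/eqP; rewrite -absz_eq0; apply: contraT; rewrite -lt0n => z_gt0.
  by have [p Kp] := natf0_pchar z_gt0 z0; case: char0; exists p.
apply: contraL lt_mq => /dvdn_leq; rewrite -leqNgt; apply.
by rewrite absz_gt0; apply: contraNneq nz_m => ->.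
Qed.

Lemma prime_subring_finite (K : idomainType) (y : K) : prime_subring y -> y != 0 ->
  finite_quotient_nonzero (@prime_subring K) y.
Proof.
move=> [m ->] nz_m; have [q pr_q [ker_q q_m]] := ex_prime_kernel nz_m.
have Fq : q \in [pchar 'F_q] by apply: pchar_Fp.
pose phi (z : K) : 'F_q := (epsilon (inhabits 0) (fun m : int => z = m%:~R))%:~R.
have phiE (n : int) : phi n%:~R = n%:~R.
  rewrite /phi; set n' := epsilon _ _.
  have En : n%:~R = n'%:~R :> K.
    by apply: (epsilon_spec (inhabits 0) (fun m : int => n%:~R = m%:~R :> K)); exists n.
  apply/eqP; rewrite -subr_eq0 -intrB -(dvdz_pcharf Fq) ker_q //.
  by rewrite intrB En subrr.
exists 'F_q, phi; split; last by rewrite phiE -(dvdz_pcharf Fq).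
split.
- exact: (phiE 1).
- by move=> _ _ [a ->] [c ->]; rewrite -intrD !phiE intrD.
- by move=> _ _ [a ->] [c ->]; rewrite -intrM !phiE intrM.
Qed.

Fixpoint ring_gen (K : idomainType) (s : seq K) : K -> Prop :=
  if s is b :: s' then adjoin (ring_gen s') b else @prime_subring K.

Lemma ring_gen_subring (K : idomainType) (s : seq K) : subring (ring_gen s).
Proof.
by elim: s => [|b s IHs] /=; [apply: prime_subring_subring | apply: adjoin_subring].
Qed.

Lemma mem_ring_gen (K : idomainType) (s : seq K) b : b \in s -> ring_gen s b.
Proof.
elim: s => [|a s IHs] //=; rewrite inE => /predU1P [-> | /IHs sb].
  exact: adjoin_elem (ring_gen_subring s) a.
exact: adjoin_base (ring_gen_subring s) _ _ sb.
Qed.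

Theorem ring_gen_finite_quotient (K : idomainType) (s : seq K) y :
  ring_gen s y -> y != 0 -> finite_quotient_nonzero (ring_gen s) y.
Proof.
elim: s y => [|b s IHs] y /= sy nz_y; first exact: prime_subring_finite.
have [y0 [sy0 nz_y0] lift] := adjoin_morph_lift (ring_gen_subring s) sy nz_y.
have [F [psi [Hpsi psi_y0]]] := IHs y0 sy0 nz_y0.
exact: lift Hpsi psi_y0.
Qed.

(** * Words of a fixed length *)

Lemma lift0_mxM (R : nzRingType) m (A B : 'M[R]_m) :
  lift0_mx A *m lift0_mx B = lift0_mx (A *m B).
Proof.
by rewrite /lift0_mx mulmx_block !mulmx0 !mul0mx !mul1mx !addr0 !add0r.
Qed.

Lemma lift0_mx1 (R : nzRingType) m : lift0_mx (1%:M : 'M[R]_m) = 1%:M.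
Proof. by rewrite /lift0_mx -scalar_mx_block. Qed.

Definition mx_over (K : Type) (S : K -> Prop) m n (M : 'M[K]_(m, n)) :=
  forall i j, S (M i j).

Section MxOver.
Variables (K : nzRingType) (S : K -> Prop).
Hypothesis HS : subring S.

Lemma mx_over1 m : mx_over S (1%:M : 'M_m).
Proof. by move=> i j; rewrite mxE; apply: subring_nat. Qed.

Lemma mx_overM m n l (M : 'M_(m, n)) (M' : 'M_(n, l)) :
  mx_over S M -> mx_over S M' -> mx_over S (M *m M').
Proof. by move=> SM SM' i j; rewrite mxE; apply: subring_sum => // k; apply: subringM. Qed.

Variables (F : nzRingType) (phi : K -> F).
Hypothesis Hphi : subring_morph S phi.

Lemma map_mxM_over m n l (M : 'M_(m, n)) (M' : 'M_(n, l)) :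
  mx_over S M -> mx_over S M' -> map_mx phi (M *m M') = map_mx phi M *m map_mx phi M'.
Proof.
move=> SM SM'; apply/matrixP => i j; rewrite !mxE (morph_sum HS Hphi).
  by apply: eq_bigr => k _; rewrite (morphM Hphi) // !mxE.
by move=> k; apply: subringM.
Qed.

Lemma map_mx1_over m : map_mx phi (1%:M : 'M_m) = 1%:M.
Proof. by apply/matrixP => i j; rewrite !mxE (morph_nat HS Hphi). Qed.

End MxOver.

Section Level.
Variables (K : fieldType) (p n : nat).
Local Notation N := #|{: n.-tuple 'I_p}|.

Definition level_mx (A : Mfun K p) : 'M[K]_N :=
  \matrix_(i, j) A n (enum_val i) (enum_val j).

Lemma level_mxE A (U W : n.-tuple 'I_p) :
  level_mx A (enum_rank U) (enum_rank W) = A n U W.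
Proof. by rewrite mxE !enum_rankK. Qed.

Lemma level_mxM A B : level_mx (mulM A B) = level_mx A *m level_mx B.
Proof.
apply/matrixP => i j; rewrite !mxE /mulM.
rewrite (big_enum_val (fun V => A n (enum_val i) V * B n V (enum_val j))) /=.
by apply: eq_bigr => k _; rewrite !mxE.
Qed.

Lemma level_mx1 : level_mx (@idM K p) = 1%:M.
Proof. by apply/matrixP => i j; rewrite !mxE /idM (inj_eq enum_val_inj). Qed.

Definition level_unit_over (S : K -> Prop) (A : Mfun K p) :=
  mx_over S (level_mx A) /\
  exists2 M, mx_over S M & level_mx A *m M = 1%:M /\ M *m level_mx A = 1%:M.

Lemma level_unit_over_inv (S : K -> Prop) A B :
  mx_over S (level_mx A) -> mx_over S (level_mx B) ->
  mulM A B = @idM K p -> mulM B A = @idM K p -> level_unit_over S A.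
Proof.
move=> SA SB AB BA; split=> //; exists (level_mx B) => //.
by rewrite -!level_mxM AB BA level_mx1.
Qed.

Variable S : K -> Prop.
Hypothesis HS : subring S.

Lemma level_unit_over1 : level_unit_over S (@idM K p).
Proof.
by rewrite /level_unit_over level_mx1; split; last exists 1%:M; rewrite ?mulmx1 //;
  apply: mx_over1.
Qed.

Lemma level_unit_overM A B :
  level_unit_over S A -> level_unit_over S B -> level_unit_over S (mulM A B).
Proof.
move=> [SA [MA SMA [AMA MAA]]] [SB [MB SMB [BMB MBB]]].
rewrite /level_unit_over level_mxM; split; first exact: mx_overM.
exists (MB *m MA); first exact: mx_overM.
split; first by rewrite mulmxA -(mulmxA (level_mx A)) BMB mulmx1 AMA.
by rewrite mulmxA -(mulmxA MB) MAA mulmx1 MBB.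
Qed.

Lemma level_unit_overV A B : level_unit_over S A ->
  mulM A B = @idM K p -> mulM B A = @idM K p -> level_unit_over S B.
Proof.
move=> [SA [M SM [AM MA]]] AB BA; rewrite /level_unit_over.
have -> : level_mx B = M.
  by rewrite -[level_mx B]mul1mx -MA -mulmxA -level_mxM AB level_mx1 mulmx1.
by split=> //; exists (level_mx A).
Qed.

Section LevelRep.
Variables (F : finFieldType) (phi : K -> F).
Hypothesis Hphi : subring_morph S phi.

(* padding by a [1] block makes the target ring nontrivial even when [N = 0] *)
Definition level_rep (A : Mfun K p) : {unit 'M[F]_N.+1} :=
  insubd (1%g : {unit 'M[F]_N.+1}) (lift0_mx (map_mx phi (level_mx A)) : 'M_N.+1).

Lemma level_repE A : level_unit_over S A ->
  val (level_rep A) = lift0_mx (map_mx phi (level_mx A)).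
Proof.
move=> [SA [M SM [AM _]]]; rewrite insubdK //.
have : lift0_mx (map_mx phi (level_mx A)) *m lift0_mx (map_mx phi M) = 1%:M.
  by rewrite lift0_mxM -(map_mxM_over HS Hphi) // AM (map_mx1_over HS Hphi) lift0_mx1.
by case/mulmx1_unit.
Qed.

Lemma level_repM A B : level_unit_over S A -> level_unit_over S B ->
  level_rep (mulM A B) = (level_rep A * level_rep B)%g.
Proof.
move=> UA UB; apply: val_inj; rewrite FinRing.val_unitM !level_repE //.
  case: UA UB => [SA _] [SB _].
  by rewrite level_mxM (map_mxM_over HS Hphi) // -lift0_mxM mulmxE.
exact: level_unit_overM.
Qed.

Lemma level_rep_neq1 A i j : level_unit_over S A ->
  phi (level_mx A i j) != (i == j)%:R -> level_rep A != 1%g.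
Proof.
move=> UA; apply: contraNneq => /(congr1 val); rewrite level_repE // => E.
have := congr1 (fun M : 'M[F]_N.+1 => M (rshift 1 i) (rshift 1 j)) E.
have Edr := block_mxEdr (1%:M : 'M[F]_1) 0 0 (map_mx phi (level_mx A)) i j.
rewrite [in RHS]mxE in Edr; rewrite -Edr /= /lift0_mx => ->.
by rewrite -idmxE mxE (inj_eq (@rshift_inj 1 _)).
Qed.

Lemma residual_level (G : Mfun K p -> Prop) g i j :
  (forall A, G A -> level_unit_over S A) -> G g -> phi (level_mx g i j) != (i == j)%:R ->
  exists (gT : finGroupType) (pi : Mfun K p -> gT),
    (forall a b, G a -> G b -> pi (mulM a b) = (pi a * pi b)%g) /\ pi g != 1%g.
Proof.
move=> UG Gg phi_g; exists _, level_rep; split; last exact: level_rep_neq1 (UG g Gg) phi_g.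
by move=> a b Ga Gb; apply: level_repM; apply: UG.
Qed.

End LevelRep.
End Level.

Lemma neq_idM_level (K : fieldType) p (g : Mfun K p) : g <> @idM K p ->
  exists n (U W : n.-tuple 'I_p), g n U W <> @idM K p n U W.
Proof.
move=> g_neq1; apply: NNPP => g_lvl; apply: g_neq1.
apply: functional_extensionality_dep => n; apply: functional_extensionality => U.
apply: functional_extensionality => W; apply: NNPP => gUW.
by apply: g_lvl; exists n, U, W.
Qed.

Definition mx_entries (K : Type) m n (M : 'M[K]_(m, n)) : seq K :=
  [seq M ij.1 ij.2 | ij <- enum {: 'I_m * 'I_n}].

Lemma mx_entries_over (K : eqType) m n (M : 'M[K]_(m, n)) :
  mx_over (fun x => x \in mx_entries M) M.
Proof. by move=> i j; apply/mapP; exists (i, j); rewrite ?mem_enum. Qed.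

Lemma gen_subgroup_level_unit (K : fieldType) p n (gens : seq (Mfun K p)) :
  (forall A, List.In A gens -> GLrec A) ->
  exists s, forall A, gen_subgroup gens A -> level_unit_over n (ring_gen s) A.
Proof.
move=> GLgens; suff [s Us] : exists s : seq K,
    forall A, List.In A gens -> level_unit_over n (fun x => x \in s) A.
  exists s => A; elim=> {A} [| A /Us [sA [M sM AM]] | A B _ UA _ UB | A B _ UA AB BA].
  - exact/level_unit_over1/ring_gen_subring.
  - by split; [move=> i j | exists M => // i j]; apply: mem_ring_gen.
  - by apply: level_unit_overM UA UB; apply: ring_gen_subring.
  - exact: level_unit_overV UA AB BA.
elim: gens GLgens => [|A0 gens IHgens] GLgens; first by exists [::].
have [s Us] := IHgens (fun A inA => GLgens A (or_intror inA)).
have [_ [B0 [_ [AB0 BA0]]]] := GLgens A0 (or_introl erefl).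
exists (mx_entries (level_mx n A0) ++ mx_entries (level_mx n B0) ++ s) => A [<- | /Us].
  apply: level_unit_over_inv AB0 BA0 => i j; rewrite !mem_cat mx_entries_over //.
  by rewrite orbT.
case=> sA [M sM AM]; split; first by move=> i j; rewrite !mem_cat sA !orbT.
by exists M => // i j; rewrite !mem_cat sM !orbT.
Qed.

Theorem mainTheorem13 (p : nat) :
  (forall K : finFieldType,
     residually_finite (@mulM K p) (@idM K p) (@GLrec K p)) /\
  (forall (K : fieldType) (gens : seq (Mfun K p)),
     (forall A, List.In A gens -> GLrec A) ->
     residually_finite (@mulM K p) (@idM K p) (gen_subgroup gens)).
Proof.
split=> [K | K gens GLgens] g Gg /neq_idM_level [n [U [W gUW]]].
  have subringT : subring (fun _ : K => True) by [].
  have idT : subring_morph (fun _ : K => True) id by [].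
  apply: (residual_level subringT idT (i := enum_rank U) (j := enum_rank W) _ Gg).
    by move=> A [_ [B [_ [AB BA]]]]; apply: level_unit_over_inv AB BA.
  by rewrite /= level_mxE (inj_eq enum_rank_inj); apply/eqP.
have [s Us] := gen_subgroup_level_unit n GLgens.
have HS := ring_gen_subring s.
set i := enum_rank U; set j := enum_rank W.
have Sg : ring_gen s (level_mx n g i j) by case: (Us g Gg).
have Sij : ring_gen s (i == j)%:R := subring_nat HS _.
have nz_gij : level_mx n g i j - (i == j)%:R != 0.
  by rewrite subr_eq0 level_mxE (inj_eq enum_rank_inj); apply/eqP.
have [F [phi [Hphi phi_gij]]] := ring_gen_finite_quotient (subringB HS Sg Sij) nz_gij.
apply: (residual_level HS Hphi (i := i) (j := j) Us Gg).
by rewrite -subr_eq0 -(morph_nat HS Hphi) -(morphB HS Hphi).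
Qed.
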